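(* Let $p$ be an odd prime and let $(G,H,T)$ be the envelope of a right conjugacy closed loop of order $2p$. Let $K$ be a subgroup with $H\lneq K\lneq G$, $|G:K|=2$ and $|K:H|=p$. Let $L\le H$ with $L\trianglelefteq K$. Then for all $a\in G\setminus K$ we have $L\cap L^a=1$ and $LL^a=L\times L^a\trianglelefteq G$.
   Context: For a finite loop $\mathcal{L}$ with identity $e$: $G=\langle R_a\mid a\in\mathcal L\rangle$ with $R_a\colon x\mapsto xa$, $H$ the stabilizer of $e$ in $G$, $T=\{R_a\}$; $(G,H,T)$ is the envelope; the loop is right conjugacy closed if $T$ is a union of conjugacy classes of $G$. *)

From mathcomp Require Import all_boot all_fingroup.
Set Implicit Arguments. Unset Strict Implicit. Unset Printing Implicit Defensive.
Import GroupScope.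

Definition is_loop (T : finType) (op : T -> T -> T) (e : T) : Prop :=
  (forall x, op e x = x /\ op x e = x) /\
  (forall a, bijective (op a)) /\
  (forall a, bijective (fun x => op x a)).

Definition rtrans (T : finType) (op : T -> T -> T) : {set {perm T}} :=
  [set s : {perm T} | [exists a, [forall x, s x == op x a]]].

Definition env_G (T : finType) (op : T -> T -> T) : {group {perm T}} :=
  <<rtrans op>>%G.

Definition env_H (T : finType) (op : T -> T -> T) (e : T) : {group {perm T}} :=
  ('C_(env_G op)[e | 'P])%G.

Definition rcc (T : finType) (op : T -> T -> T) : Prop :=
  forall t, t \in rtrans op -> t ^: env_G op \subset rtrans op.

From mathcomp Require Import all_boot all_fingroup commutator.
Set Implicit Arguments.
Unset Strict Implicit.
Unset Printing Implicit Defensive.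

Import GroupScope.

(* G is transitive on the loop (R_y maps e to y), so the stabilizer H of e is
   core-free in G.  Since |G : K| = 2, every g in G either fixes both L and
   L^a or swaps them; hence L ∩ L^a is a normal subgroup of G contained in H,
   and is trivial.  Then L and L^a, both normal in K, centralize each other,
   and their product is direct and normalized by G. *)

Lemma mem_index2_mulV (gT : finGroupType) (G H : {group gT}) x y :
  H \subset G -> #|G : H| = 2 -> x \in G :\: H -> y \in G :\: H ->
  x * y^-1 \in H.
Proof. by move=> sHG iGH Hx Hy; rewrite -mem_rcoset (rcoset_index2 sHG iGH Hy). Qed.

Lemma normal_tiI_cents (gT : finGroupType) (K A B : {group gT}) :
  A <| K -> B <| K -> A :&: B = 1 -> B \subset 'C(A).
Proof.
move=> /andP[sAK nAK] /andP[sBK nBK] tiAB; apply/commG1P/trivgP.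
rewrite -tiAB setIC commg_subI // subsetI subxx.
  exact: subset_trans sBK nAK.
exact: subset_trans sAK nBK.
Qed.

Section IndexTwoConjugates.

Variables (gT : finGroupType) (G K L : {group gT}) (a : gT).
Hypotheses (sKG : K \subset G) (iGK : #|G : K| = 2).
Hypotheses (aGK : a \in G :\: K) (nsLK : L <| K).

Lemma conjs_index2 g : g \in G ->
  (L :^ g = L /\ (L :^ a) :^ g = L :^ a) \/ (L :^ g = L :^ a /\ (L :^ a) :^ g = L).
Proof.
have nLK := normal_norm nsLK; have /setDP[Ga _] := aGK.
move=> Gg; rewrite -conjsgM; have [Kg | notKg] := boolP (g \in K).
  have nKG := normal_norm (index2_normal sKG iGK).
  have Kaga : g ^ a^-1 \in K by rewrite memJ_norm ?groupV ?(subsetP nKG).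
  rewrite conjgE invgK mulgA in Kaga.
  by left; rewrite -[a * g](mulgKV a) conjsgM (normsP nLK _ Kaga) (normsP nLK _ Kg).
have gGK : g \in G :\: K by rewrite inE notKg Gg.
have Kga : g * a^-1 \in K by apply: mem_index2_mulV sKG iGK gGK aGK.
have Kag : a * g \in K.
  rewrite -[g]invgK; apply: mem_index2_mulV sKG iGK aGK _.
  by rewrite inE groupV notKg groupV.
right; rewrite (normsP nLK _ Kag); split=> //.
by rewrite -[g](mulgKV a) conjsgM (normsP nLK _ Kga).
Qed.

Lemma normal_conj_index2 : L :^ a <| K.
Proof.
have /setDP[Ga _] := aGK.
by rewrite -(normsP (normal_norm (index2_normal sKG iGK)) a Ga) normalJ.
Qed.

Lemma normal_setI_conj_index2 : L :&: L :^ a <| G.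
Proof.
rewrite /normal (subset_trans (subsetIl _ _) (subset_trans (normal_sub nsLK) sKG)).
apply/normsP=> g /conjs_index2; rewrite conjIg.
by case=> [[-> ->] | [-> ->]]; rewrite // setIC.
Qed.

Hypothesis tiLLa : L :&: L :^ a = 1.

Lemma cents_conj_index2 : L :^ a \subset 'C(L).
Proof. exact: normal_tiI_cents nsLK normal_conj_index2 tiLLa. Qed.

Lemma dprod_conj_index2 : L \x L :^ a = L * L :^ a.
Proof. exact: dprodE cents_conj_index2 tiLLa. Qed.

Lemma normal_mul_conj_index2 : L * L :^ a <| G.
Proof.
apply/andP; split.
  by rewrite mul_subG // (subset_trans _ sKG) ?normal_sub ?normal_conj_index2.
apply/normsP=> g /conjs_index2; rewrite conjsMg.
by case=> [[-> ->] | [-> ->]]; rewrite // (centC cents_conj_index2).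
Qed.

End IndexTwoConjugates.

Lemma gcore_stab1_perm_trans (T : finType) (G : {group {perm T}}) x :
  [transitive G, on setT | 'P] -> gcore 'C_G[x | 'P] G = 1.
Proof.
move=> transG; apply/trivgP; have := perm_faithful G.
rewrite /faithful (astab_trans_gcore transG (in_setT x)); apply: subset_trans.
have sCG := subset_trans (gcore_sub _ _) (subsetIl _ _).
by rewrite subsetI sCG gcore_max ?gcore_norm // (subset_trans (gcore_sub _ _)) ?subsetIr.
Qed.

Lemma env_G_trans (T : finType) (op : T -> T -> T) (e : T) :
  is_loop op e -> [transitive env_G op, on setT | 'P].
Proof.
case=> eid [_ rbij]; have -> : [set: T] = orbit 'P (env_G op) e.
  apply/setP=> y; rewrite inE; apply/esym/orbitP.
  exists (perm (bij_inj (rbij y))); last by rewrite /= apermE permE (eid y).1.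
  by apply: mem_gen; rewrite inE; apply/existsP; exists y; apply/forallP=> x; rewrite permE.
exact: atrans_orbit.
Qed.

Theorem lemma5p2 (p : nat) (T : finType) (op : T -> T -> T) (e : T)
    (K L : {group {perm T}}) :
  prime p -> odd p ->
  is_loop op e -> rcc op -> #|T| = (2 * p)%N ->
  env_H op e \proper K -> K \proper env_G op ->
  #|env_G op : K| = 2%N -> #|K : env_H op e| = p ->
  L \subset env_H op e -> L <| K ->
  forall a, a \in env_G op :\: K ->
    L :&: L :^ a = 1 /\ L \x (L :^ a) = L * (L :^ a) /\ L * (L :^ a) <| env_G op.
Proof.
move=> _ _ loop _ _ _ /proper_sub sKG iGK _ sLH nsLK a aGK.
have tiLLa : L :&: L :^ a = 1.
  apply/trivgP; rewrite -(gcore_stab1_perm_trans e (env_G_trans loop)); apply: gcore_max.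
  - exact: subset_trans (subsetIl _ _) sLH.
  - exact: normal_norm (normal_setI_conj_index2 sKG iGK aGK nsLK).
split=> //; split.
  exact: dprod_conj_index2 sKG iGK aGK nsLK tiLLa.
exact: normal_mul_conj_index2 sKG iGK aGK nsLK tiLLa.
Qed.
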